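(* Let $n\ge3$, $r>0$ and let $F$ be the chord length distribution function of $\mathcal P_{n,r}$. Then $$F(s)=\Big[\Big(1-\frac{\pi}{n}\cot\frac{\pi}{n}\Big)\csc\frac{\pi}{n}+\frac{\pi}{n}\sec\frac{\pi}{n}\Big]\frac{s}{4r}$$ for $0\le s\le 2r\cos^2\frac{\pi}{2n}$ if $n=3$, and for $0\le s\le 2r\sin\frac{\pi}{n}$ if $n\ge4$.
   Context: $\mathcal P_{n,r}$ denotes the regular polygon with $n$ sides whose circumscribed circle has radius $r$ and centre at the origin, with perimeter $u=2nr\sin(\pi/n)$. Lines are $g(p,\phi)=\{x\cos\phi+y\sin\phi=p\}$, $p\ge0$, $0\le\phi<2\pi$, with the motion-invariant measure $\mu$ given by $dp\,d\phi$. For a line $g$ meeting the polygon, $|\chi(g)|$ is the length of the chord $g\cap\mathcal P_{n,r}$. The chord length distribution function is $F(s)=\frac1u\,\mu(\{g: g\cap\mathcal P_{n,r}\ne\emptyset,\ |\chi(g)|\le s\})$. *)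

From Stdlib Require Import Reals Lra ClassicalDescription.
Open Scope R_scope.

(* Regular n-gon P_{n,r}: circumscribed radius r, centre origin, vertices at
   r (cos(2 pi k/n), sin(2 pi k/n)), k = 0..n-1.  As a convex polygon it is the
   intersection of the n half-planes bounded by its sides: the side between
   vertices k and k+1 has outer unit normal at angle (2k+1) pi / n and lies at
   distance r cos(pi/n) (the apothem) from the origin. *)
Definition in_polygon (n : nat) (r : R) (x y : R) : Prop :=
  forall k : nat, (k < n)%nat ->
    x * cos ((2 * INR k + 1) * PI / INR n) + y * sin ((2 * INR k + 1) * PI / INR n)
      <= r * cos (PI / INR n).

Definition on_line (p phi x y : R) : Prop := x * cos phi + y * sin phi = p.

Definition meets (n : nat) (r p phi : R) : Prop :=
  exists x y, in_polygon n r x y /\ on_line p phi x y.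

(* |chi(g)| <= s : the chord g \cap P_{n,r} (a segment) has length at most s,
   i.e. any two of its points are at Euclidean distance at most s. *)
Definition chord_le (n : nat) (r p phi s : R) : Prop :=
  forall x1 y1 x2 y2,
    in_polygon n r x1 y1 -> on_line p phi x1 y1 ->
    in_polygon n r x2 y2 -> on_line p phi x2 y2 ->
    sqrt ((x1 - x2) ^ 2 + (y1 - y2) ^ 2) <= s.

Definition ind (P : Prop) : R := if excluded_middle_informative P then 1 else 0.

Definition is_RInt (f : R -> R) (a b v : R) : Prop :=
  exists pr : Riemann_integrable f a b, RiemannInt pr = v.

Definition perimeter (n : nat) (r : R) : R := 2 * INR n * r * sin (PI / INR n).

(* mu({g : g meets P, |chi(g)| <= s}) = m, with dmu = dp dphi,
   p in [0, infty), phi in [0, 2 pi).  Lines with p > r miss the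
   circumscribed disc, hence the polygon, so p ranges over [0, r]. *)
Definition line_measure (n : nat) (r s m : R) : Prop :=
  exists I : R -> R,
    (forall phi, is_RInt (fun p => ind (meets n r p phi /\ chord_le n r p phi s)) 0 r (I phi))
    /\ is_RInt I 0 (2 * PI) m.

Definition chord_cdf_is (n : nat) (r s v : R) : Prop :=
  exists m, line_measure n r s m /\ v = m / perimeter n r.

Definition cot (x : R) : R := cos x / sin x.
Definition csc (x : R) : R := 1 / sin x.
Definition sec (x : R) : R := 1 / cos x.

From Pilot Require Import Defs.
From Stdlib Require Import Reals Lra Lia ZArith List ClassicalDescription Classical.
From Coquelicot Require Import Coquelicot.
Open Scope R_scope.

(* Write ω = π/n.  A direction φ is φ = 2kω + b with |b| <= ω: vertex k is the top
   vertex of the polygon in direction φ, at height r cos b (the support function).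
   Near vertex k the polygon is a wedge bounded by the two sides through it, and a
   line g(p, φ) at depth r cos b - p below that vertex cuts the wedge in a chord of
   length (r cos b - p) sin 2ω / (sin(ω - b) sin(ω + b)).  Hence the lines of
   direction φ with a chord of length at most s are those at depth at most
   K(b) = s sin(ω - b) sin(ω + b) / sin 2ω below the top vertex, together with the
   corresponding cap at the opposite vertex (direction φ + π) -- provided the cap
   stays above the neighbouring vertices, which is what the hypothesis on s
   guarantees (for all but finitely many directions).  Since the lines of directions
   φ and φ + π are the same, the measure of these lines is the integral of K over all
   directions, i.e. n times the integral of K over [-ω, ω], which is computed by an
   antiderivative; dividing by the perimeter gives the formula. *)

Ltac minmax_lra := unfold Rmin, Rmax in *;
  repeat match goal with
  | H : context [Rle_dec ?a ?b] |- _ => destruct (Rle_dec a b)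
  | |- context [Rle_dec ?a ?b] => destruct (Rle_dec a b)
  end; lra.

Lemma is_RInt_const_on (f : R -> R) a b v : a <= b ->
  (forall x, a < x < b -> f x = v) -> is_RInt f a b ((b - a) * v).
Proof.
  intros hab H. apply is_RInt_ext with (fun _ => v); [|apply (is_RInt_const a b v)].
  intros x hx. symmetry; apply H. minmax_lra.
Qed.

Lemma is_RInt_ext_but_point (f g : R -> R) a b c v : a <= b ->
  (forall x, a <= x <= b -> x <> c -> f x = g x) -> is_RInt g a b v -> is_RInt f a b v.
Proof.
  intros hab H Hg.
  assert (Hopen : forall u w, a <= u <= w -> w <= b -> ~ (u < c < w) ->
            forall x, Rmin u w < x < Rmax u w -> g x = f x).
  { intros u w hu hw hc x hx. symmetry; apply H; [minmax_lra|].
    intros ->. apply hc. minmax_lra. }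
  destruct (classic (a < c < b)) as [hc|hc].
  - assert (Ex : ex_RInt g a b) by (exists v; exact Hg).
    assert (E1 : ex_RInt g a c) by (apply (ex_RInt_Chasles_1 g a c b); [lra | exact Ex]).
    assert (E2 : ex_RInt g c b) by (apply (ex_RInt_Chasles_2 g a c b); [lra | exact Ex]).
    replace v with (plus (RInt g a c) (RInt g c b))
      by (rewrite RInt_Chasles by assumption; exact (is_RInt_unique _ _ _ _ Hg)).
    apply (is_RInt_Chasles f a c b).
    + apply is_RInt_ext with g; [apply Hopen; lra | exact (RInt_correct _ _ _ E1)].
    + apply is_RInt_ext with g; [apply Hopen; lra | exact (RInt_correct _ _ _ E2)].
  - apply is_RInt_ext with g; [apply Hopen; lra | exact Hg].
Qed.

Lemma is_RInt_ext_but_finite (l : list R) : forall (f g : R -> R) a b v, a <= b ->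
  (forall x, a <= x <= b -> ~ In x l -> f x = g x) -> is_RInt g a b v -> is_RInt f a b v.
Proof.
  induction l as [|c l IH]; intros f g a b v hab H Hg.
  - apply is_RInt_ext_but_point with g (a - 1); [exact hab | | exact Hg].
    intros x hx _. apply H; auto.
  -
    set (g' := fun x => if Req_EM_T x c then f x else g x).
    apply IH with g'; auto.
    + intros x hx hn. unfold g'. destruct (Req_EM_T x c); auto.
      apply H; auto. intros [h|h]; auto.
    + apply is_RInt_ext_but_point with g c; auto. intros x _ hx. unfold g'.
      destruct (Req_EM_T x c); tauto.
Qed.

Lemma ind_of_true (Q : Prop) : Q -> Defs.ind Q = 1.
Proof. intros h; unfold Defs.ind; destruct (excluded_middle_informative Q); tauto. Qed.

Lemma ind_of_false (Q : Prop) : ~ Q -> Defs.ind Q = 0.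
Proof. intros h; unfold Defs.ind; destruct (excluded_middle_informative Q); tauto. Qed.

Definition clamp a b x := Rmin b (Rmax a x).

Lemma is_RInt_ind_interval a b c d : a <= b -> c <= d ->
  is_RInt (fun p => Defs.ind (c <= p <= d)) a b (clamp a b d - clamp a b c).
Proof.
  intros hab hcd. unfold clamp.
  set (c' := Rmin b (Rmax a c)). set (d' := Rmin b (Rmax a d)).
  assert (h1 : a <= c' <= d') by (unfold c', d'; minmax_lra).
  assert (h2 : d' <= b) by (unfold d'; minmax_lra).
  replace (d' - c') with ((((c' - a) * 0) + ((d' - c') * 1)) + ((b - d') * 0)) by ring.
  apply (is_RInt_Chasles _ a d' b ((c' - a) * 0 + (d' - c') * 1) ((b - d') * 0));
    [apply (is_RInt_Chasles _ a c' d' ((c' - a) * 0) ((d' - c') * 1))|];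
    apply is_RInt_const_on; try lra; intros x hx.
  - apply ind_of_false. unfold c' in hx. minmax_lra.
  - apply ind_of_true. unfold c', d' in hx. minmax_lra.
  - apply ind_of_false. unfold d' in hx. minmax_lra.
Qed.

Definition convex_set (C : R -> Prop) := forall x y z, C x -> C y -> x <= z <= y -> C z.

(* A convex set meeting [a, b] agrees, inside [a, b] and up to its endpoints,
   with an interval [c, d]: its infimum and supremum there. *)
Lemma convex_set_interval (C : R -> Prop) a b : convex_set C ->
  (exists x, a <= x <= b /\ C x) ->
  exists c d, a <= c <= d /\ d <= b /\
    (forall x, a <= x <= b -> C x -> c <= x <= d) /\ (forall x, c < x < d -> C x).
Proof.
  intros HC [x0 [hx0 hC0]].
  set (E := fun x => a <= x <= b /\ C x).
  destruct (completeness E) as [d [hd1 hd2]];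
    [exists b; intros x [hx _]; lra | exists x0; split; auto |].
  destruct (completeness (fun x => E (- x))) as [mc [hc1 hc2]].
  { exists (- a); intros x [hx _]; lra. }
  { exists (- x0); split; rewrite Ropp_involutive; auto. }
  assert (Hc : forall x, E x -> - mc <= x).
  { intros x hx. assert (- x <= mc) by (apply hc1; rewrite Ropp_involutive; auto). lra. }
  assert (Hd : forall x, E x -> x <= d) by (intros x hx; apply hd1; auto).
  assert (HE0 : E x0) by (split; auto).
  exists (- mc), d. split; [split|split; [|split]].
  - assert (mc <= - a) by (apply hc2; intros x [hx _]; lra). lra.
  - specialize (Hc x0 HE0); specialize (Hd x0 HE0); lra.
  - apply hd2. intros x [hx _]; lra.
  - intros x hx hCx. split; [apply Hc | apply Hd]; split; auto.
  - intros x hx.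
    (* [x] lies strictly between two points of [E], hence in [C] by convexity. *)
    assert (Ey : exists y, E y /\ y < x).
    { apply NNPP; intro hn. assert (mc <= - x); [|lra].
      apply hc2. intros z hz. destruct (Rlt_or_le (- z) x) as [hz'|hz']; [|lra].
      exfalso; apply hn; exists (- z); auto. }
    assert (Ez : exists z, E z /\ x < z).
    { apply NNPP; intro hn. assert (d <= x); [|lra].
      apply hd2. intros z hz. destruct (Rlt_or_le x z) as [hz'|hz']; [|lra].
      exfalso; apply hn; exists z; auto. }
    destruct Ey as [y [[_ hy] hyx]], Ez as [z [[_ hz] hxz]].
    apply (HC y z x); auto; lra.
Qed.

Lemma ex_RInt_ind_convex (C : R -> Prop) a b : a <= b -> convex_set C ->
  ex_RInt (fun p => Defs.ind (C p)) a b.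
Proof.
  intros hab HC.
  destruct (classic (exists x, a <= x <= b /\ C x)) as [hne|hno].
  - destruct (convex_set_interval C a b HC hne) as [c [d [hc [hd [Hout Hin]]]]].
    exists (clamp a b d - clamp a b c).
    apply is_RInt_ext_but_finite with (c :: d :: nil) (fun p => Defs.ind (c <= p <= d));
      [exact hab | | apply is_RInt_ind_interval; lra].
    intros x hx hin.
    assert (x <> c) by (intro; apply hin; left; auto).
    assert (x <> d) by (intro; apply hin; right; left; auto).
    destruct (classic (C x)) as [hCx|hCx].
    + rewrite (ind_of_true (C x)), (ind_of_true (c <= x <= d)); auto.
    + rewrite (ind_of_false (C x)), (ind_of_false (c <= x <= d)); auto.
      intros hx'. apply hCx, Hin. lra.
  - exists ((b - a) * 0). apply is_RInt_const_on; auto. intros x hx.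
    apply ind_of_false. intro hC. apply hno. exists x. split; auto; lra.
Qed.

Lemma is_RInt_Rplus (f g : R -> R) a b u v : is_RInt f a b u -> is_RInt g a b v ->
  is_RInt (fun x => f x + g x) a b (u + v).
Proof. exact (is_RInt_plus f g a b u v). Qed.

Lemma is_RInt_Rminus (f g : R -> R) a b u v : is_RInt f a b u -> is_RInt g a b v ->
  is_RInt (fun x => f x - g x) a b (u - v).
Proof. exact (is_RInt_minus f g a b u v). Qed.

(* Coquelicot's continuity rules, stated with the operations of [R] so that
   they apply to goals written with [+], [-] and [*]. *)
Lemma continuous_Rplus (f g : R -> R) x : continuous f x -> continuous g x ->
  continuous (fun y => f y + g y) x.
Proof. exact (continuous_plus f g x). Qed.

Lemma continuous_Rminus (f g : R -> R) x : continuous f x -> continuous g x ->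
  continuous (fun y => f y - g y) x.
Proof. exact (continuous_minus f g x). Qed.

Lemma continuous_Rmult (f g : R -> R) x : continuous f x -> continuous g x ->
  continuous (fun y => f y * g y) x.
Proof. exact (continuous_mult f g x). Qed.

Lemma continuous_Rmax (f g : R -> R) x : continuous f x -> continuous g x ->
  continuous (fun y => Rmax (f y) (g y)) x.
Proof.
  intros Hf Hg.
  assert (E : forall a b, (a + b + Rabs (a - b)) * / 2 = Rmax a b).
  { intros a b. unfold Rmax. destruct Rle_dec;
      [rewrite Rabs_left1 by lra | rewrite Rabs_right by lra]; field. }
  apply continuous_ext with (fun y => (f y + g y + Rabs (f y - g y)) * / 2).
  - intros y. apply E.
  - apply continuous_Rmult; [|apply continuous_const].
    apply continuous_Rplus; [apply continuous_Rplus; auto|].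
    apply continuous_Rabs_comp, continuous_Rminus; auto.
Qed.

Lemma continuous_Rmin (f g : R -> R) x : continuous f x -> continuous g x ->
  continuous (fun y => Rmin (f y) (g y)) x.
Proof.
  intros Hf Hg.
  assert (E : forall a b, a + b - Rmax a b = Rmin a b).
  { intros a b. unfold Rmin, Rmax. destruct (Rle_dec a b); lra. }
  apply continuous_ext with (fun y => f y + g y - Rmax (f y) (g y)).
  - intros y. apply E.
  - apply continuous_Rminus; [apply continuous_Rplus | apply continuous_Rmax]; auto.
Qed.

Lemma is_RInt_shift (f : R -> R) a b c l :
  is_RInt f (a + c) (b + c) l -> is_RInt (fun y => f (y + c)) a b l.
Proof.
  intros H. apply is_RInt_ext with (fun y => scal 1 (f (1 * y + c))).
  - intros x _. unfold scal; simpl. unfold mult; simpl. rewrite !Rmult_1_l. reflexivity.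
  - apply (is_RInt_comp_lin f 1 c a b l). rewrite !Rmult_1_l. exact H.
Qed.

Lemma is_RInt_fold (f : R -> R) T : (forall x, continuous f x) ->
  is_RInt f 0 (2 * T) (RInt (fun x => f x + f (x + T)) 0 T).
Proof.
  intros H.
  assert (ex : forall a b, ex_RInt f a b)
    by (intros a b; exact (ex_RInt_continuous f a b (fun z _ => H z))).
  assert (A : is_RInt f 0 T (RInt f 0 T)) by exact (RInt_correct _ _ _ (ex 0 T)).
  assert (B : is_RInt (fun x => f (x + T)) 0 T (RInt f T (2 * T))).
  { apply is_RInt_shift. replace (0 + T) with T by ring.
    replace (T + T) with (2 * T) by ring. exact (RInt_correct _ _ _ (ex T (2 * T))). }
  replace (RInt (fun x => f x + f (x + T)) 0 T) with (RInt f 0 T + RInt f T (2 * T)).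
  - apply (is_RInt_Chasles f 0 T (2 * T)); auto. exact (RInt_correct _ _ _ (ex T (2 * T))).
  - symmetry. apply is_RInt_unique, is_RInt_Rplus; assumption.
Qed.

Lemma is_RInt_periodic (f : R -> R) T : (forall x, continuous f x) ->
  (forall x, f (x + T) = f x) ->
  forall m : nat, is_RInt f 0 (INR m * T) (INR m * RInt f 0 T).
Proof.
  intros H HT.
  assert (HmT : forall m x, f (x + INR m * T) = f x).
  { induction m; intros x; [simpl; rewrite Rmult_0_l, Rplus_0_r; auto|].
    rewrite S_INR. replace (x + (INR m + 1) * T) with ((x + INR m * T) + T) by ring.
    rewrite HT; auto. }
  induction m.
  - simpl. rewrite !Rmult_0_l. exact (is_RInt_point f 0).
  - rewrite S_INR. replace ((INR m + 1) * RInt f 0 T) with (INR m * RInt f 0 T + RInt f 0 T) by ring.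
    apply (is_RInt_Chasles f 0 (INR m * T)); auto.
    apply is_RInt_ext with (fun y => f (y - INR m * T)).
    + intros x _. replace x with ((x - INR m * T) + INR m * T) at 2 by ring. rewrite HmT; auto.
    + apply is_RInt_shift. replace (INR m * T + - (INR m * T)) with 0 by ring.
      replace ((INR m + 1) * T + - (INR m * T)) with T by ring.
      exact (RInt_correct _ _ _ (ex_RInt_continuous f 0 T (fun z _ => H z))).
Qed.

Lemma Defs_is_RInt (f : R -> R) a b v : is_RInt f a b v -> Defs.is_RInt f a b v.
Proof.
  intros H. assert (E : ex_RInt f a b) by (exists v; exact H).
  exists (ex_RInt_Reals_0 _ _ _ E).
  rewrite <- RInt_Reals, (is_RInt_unique _ _ _ _ H). reflexivity.
Qed.

(* Half the central angle of a side, ω = π/n. *)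
Definition omega (n : nat) := PI / INR n.

Lemma omega_facts n : (3 <= n)%nat -> 0 < omega n /\ omega n <= PI / 3 /\ INR n * omega n = PI.
Proof.
  intros hn. assert (h3 : 3 <= INR n) by (replace 3 with (INR 3) by (simpl; ring); apply le_INR; auto).
  pose proof PI_RGT_0. unfold omega. split; [|split].
  - apply Rdiv_lt_0_compat; lra.
  - unfold Rdiv. apply Rmult_le_compat_l; [lra|]. apply Rinv_le_contravar; lra.
  - field. lra.
Qed.

Lemma omega_trig_pos n : (3 <= n)%nat ->
  0 < sin (2 * omega n) /\ 0 < sin (omega n) /\ 0 < cos (omega n).
Proof.
  intros hn. destruct (omega_facts n hn) as [h0 [h1 _]]. pose proof PI_RGT_0.
  split; [|split]; [apply sin_gt_0 | apply sin_gt_0 | apply cos_gt_0]; lra.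
Qed.

Lemma period_Z (f : R -> R) : (forall x (m : nat), f (x + 2 * INR m * PI) = f x) ->
  forall x (q : Z), f (x + 2 * IZR q * PI) = f x.
Proof.
  intros Hf x q. destruct (Z_le_gt_dec 0 q) as [h|h].
  - rewrite <- (Z2Nat.id q), <- INR_IZR_INZ by exact h. apply Hf.
  - rewrite <- (Hf (x + 2 * IZR q * PI) (Z.to_nat (- q))).
    rewrite INR_IZR_INZ, Z2Nat.id, opp_IZR by lia. f_equal; ring.
Qed.

Lemma cos_period_Z x (q : Z) : cos (x + 2 * IZR q * PI) = cos x.
Proof. exact (period_Z cos cos_period x q). Qed.

Lemma sin_period_Z x (q : Z) : sin (x + 2 * IZR q * PI) = sin x.
Proof. exact (period_Z sin sin_period x q). Qed.

Lemma rotation_reduce n (j : Z) x : (3 <= n)%nat ->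
  exists q k, (0 <= k < Z.of_nat n)%Z /\
    x + 2 * IZR j * omega n = (x + 2 * IZR k * omega n) + 2 * IZR q * PI.
Proof.
  intros hn. destruct (omega_facts n hn) as [_ [_ hnw]].
  exists (j / Z.of_nat n)%Z, (j mod Z.of_nat n)%Z. split; [apply Z.mod_pos_bound; lia|].
  rewrite (Z.div_mod j (Z.of_nat n)) at 1 by lia.
  rewrite plus_IZR, mult_IZR, <- INR_IZR_INZ, <- hnw. ring.
Qed.

Lemma cos_le_outside w x : 0 < w <= PI -> w <= x <= 2 * PI - w -> cos x <= cos w.
Proof.
  intros hw hx. destruct (Rle_or_lt x PI) as [h|h].
  - destruct (Req_dec x w) as [->|e]; [lra|].
    left. apply cos_decreasing_1; lra.
  - replace (cos x) with (cos (2 * PI - x)) by (rewrite cos_minus, cos_2PI, sin_2PI; ring).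
    destruct (Req_dec (2 * PI - x) w) as [->|e]; [lra|].
    left. apply cos_decreasing_1; lra.
Qed.

Lemma cos_ge_inside w b : 0 < w <= PI -> - w <= b <= w -> cos w <= cos b.
Proof.
  intros hw hb. destruct (Rle_or_lt 0 b) as [h|h].
  - destruct (Req_dec b w) as [->|e]; [lra|].
    left. apply cos_decreasing_1; lra.
  - rewrite <- (cos_neg b). destruct (Req_dec (- b) w) as [e|e]; [rewrite e; lra|].
    left. apply cos_decreasing_1; lra.
Qed.

Lemma reduced_index_bounds n (k : Z) : (0 <= k < Z.of_nat n)%Z ->
  0 <= IZR k <= INR n - 1.
Proof.
  intros hk. rewrite INR_IZR_INZ. replace 1 with (IZR 1) by reflexivity.
  rewrite <- minus_IZR. split; apply IZR_le; lia.
Qed.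

Lemma cos_odd_multiple_le n (m : Z) : (3 <= n)%nat ->
  cos ((2 * IZR m + 1) * omega n) <= cos (omega n).
Proof.
  intros hn. destruct (omega_facts n hn) as [h0 [h1 hnw]]. pose proof PI_RGT_0.
  destruct (rotation_reduce n m (omega n) hn) as [q [k [hk e]]].
  replace ((2 * IZR m + 1) * omega n) with (omega n + 2 * IZR m * omega n) by ring.
  rewrite e, cos_period_Z. apply reduced_index_bounds in hk.
  apply cos_le_outside; nra.
Qed.

Lemma cos_even_shift_le n (m : Z) b : (3 <= n)%nat -> - omega n <= b <= omega n ->
  cos (b + 2 * IZR m * omega n) <= cos b.
Proof.
  intros hn hb. destruct (omega_facts n hn) as [h0 [h1 hnw]]. pose proof PI_RGT_0.
  destruct (rotation_reduce n m b hn) as [q [k [hk e]]].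
  rewrite e, cos_period_Z. destruct (Z.eq_dec k 0) as [->|ek].
  - rewrite Rmult_0_r, Rmult_0_l, Rplus_0_r. lra.
  - assert (1 <= IZR k) by (apply IZR_le; lia). apply reduced_index_bounds in hk.
    apply Rle_trans with (cos (omega n)); [apply cos_le_outside | apply cos_ge_inside]; nra.
Qed.

Lemma in_polygon_side n r x y (j : Z) : (3 <= n)%nat -> in_polygon n r x y ->
  x * cos ((2 * IZR j + 1) * omega n) + y * sin ((2 * IZR j + 1) * omega n) <= r * cos (omega n).
Proof.
  intros hn H. destruct (rotation_reduce n j (omega n) hn) as [q [k [hk e]]].
  replace ((2 * IZR j + 1) * omega n) with (omega n + 2 * IZR j * omega n) by ring.
  rewrite e, cos_period_Z, sin_period_Z.
  replace (omega n + 2 * IZR k * omega n) with ((2 * INR (Z.to_nat k) + 1) * PI / INR n)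
    by (rewrite INR_IZR_INZ, Z2Nat.id by lia; unfold omega, Rdiv; ring).
  apply H. lia.
Qed.

Definition vertex_x n r (k : Z) := r * cos (2 * IZR k * omega n).
Definition vertex_y n r (k : Z) := r * sin (2 * IZR k * omega n).

Lemma vertex_height n r k A :
  vertex_x n r k * cos A + vertex_y n r k * sin A = r * cos (2 * IZR k * omega n - A).
Proof. unfold vertex_x, vertex_y. rewrite cos_minus. ring. Qed.

Lemma vertex_in_polygon n r k : (3 <= n)%nat -> 0 < r -> in_polygon n r (vertex_x n r k) (vertex_y n r k).
Proof.
  intros hn hr j hj. rewrite vertex_height. apply Rmult_le_compat_l; [lra|].
  rewrite <- cos_neg.
  replace (- (2 * IZR k * omega n - (2 * INR j + 1) * PI / INR n))
    with ((2 * IZR (Z.of_nat j - k) + 1) * omega n)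
    by (rewrite minus_IZR, <- INR_IZR_INZ; unfold omega, Rdiv; ring).
  apply cos_odd_multiple_le; auto.
Qed.

Lemma in_polygon_convex n r x1 y1 x2 y2 l : in_polygon n r x1 y1 -> in_polygon n r x2 y2 ->
  0 <= l <= 1 -> in_polygon n r (l * x1 + (1 - l) * x2) (l * y1 + (1 - l) * y2).
Proof.
  intros H1 H2 hl k hk. specialize (H1 k hk). specialize (H2 k hk).
  set (c := cos _) in *. set (s := sin _) in *. set (h := r * cos _) in *.
  replace ((l * x1 + (1 - l) * x2) * c + (l * y1 + (1 - l) * y2) * s)
    with (l * (x1 * c + y1 * s) + (1 - l) * (x2 * c + y2 * s)) by ring.
  nra.
Qed.

(* Signed position of (x, y) along the lines of direction φ: with it, a point of
   g(p, φ) is p (cos φ, sin φ) + t (- sin φ, cos φ). *)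
Definition line_coord phi x y := - x * sin phi + y * cos phi.

Lemma on_line_param p phi x y : on_line p phi x y ->
  x = p * cos phi - line_coord phi x y * sin phi /\
  y = p * sin phi + line_coord phi x y * cos phi.
Proof.
  unfold on_line, line_coord. intros <-. pose proof (sin2_cos2 phi) as e. unfold Rsqr in e.
  split; [rewrite <- (Rmult_1_r x) at 1 | rewrite <- (Rmult_1_r y) at 1]; rewrite <- e; ring.
Qed.

Lemma on_line_height p phi x y psi : on_line p phi x y ->
  x * cos psi + y * sin psi = p * cos (psi - phi) + line_coord phi x y * sin (psi - phi).
Proof.
  intros H. destruct (on_line_param _ _ _ _ H) as [hx hy].
  rewrite cos_minus, sin_minus. set (t := line_coord phi x y) in *. rewrite hx, hy. ring.
Qed.

Lemma on_line_dist p phi x1 y1 x2 y2 : on_line p phi x1 y1 -> on_line p phi x2 y2 ->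
  sqrt ((x1 - x2) ^ 2 + (y1 - y2) ^ 2) = Rabs (line_coord phi x1 y1 - line_coord phi x2 y2).
Proof.
  intros H1 H2. destruct (on_line_param _ _ _ _ H1) as [hx1 hy1].
  destruct (on_line_param _ _ _ _ H2) as [hx2 hy2].
  pose proof (sin2_cos2 phi) as e. unfold Rsqr in e.
  set (t1 := line_coord phi x1 y1) in *. set (t2 := line_coord phi x2 y2) in *.
  rewrite <- sqrt_Rsqr_abs. f_equal. rewrite hx1, hy1, hx2, hy2.
  transitivity ((t1 - t2) * (t1 - t2) * (sin phi * sin phi + cos phi * cos phi)); [ring|].
  rewrite e. unfold Rsqr. ring.
Qed.

Lemma on_line_flip p phi x y : on_line (- p) (phi + PI) x y <-> on_line p phi x y.
Proof. unfold on_line. rewrite neg_cos, neg_sin. split; intros; lra. Qed.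

Lemma line_coord_flip phi x y : line_coord (phi + PI) x y = - line_coord phi x y.
Proof. unfold line_coord. rewrite neg_cos, neg_sin. ring. Qed.

Lemma meets_flip n r p phi : meets n r (- p) (phi + PI) <-> meets n r p phi.
Proof.
  unfold meets. split; intros [x [y [h1 h2]]]; exists x, y; split; auto; apply on_line_flip; auto.
Qed.

Lemma chord_le_flip n r p phi s : chord_le n r (- p) (phi + PI) s <-> chord_le n r p phi s.
Proof.
  unfold chord_le. split; intros H x1 y1 x2 y2 a b c d; apply H; auto; apply on_line_flip; auto.
Qed.

Definition long_chord n r p phi s := exists x1 y1 x2 y2,
  in_polygon n r x1 y1 /\ on_line p phi x1 y1 /\
  in_polygon n r x2 y2 /\ on_line p phi x2 y2 /\
  line_coord phi x2 y2 - line_coord phi x1 y1 > s.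

Lemma chord_le_iff n r p phi s : chord_le n r p phi s <-> ~ long_chord n r p phi s.
Proof.
  split.
  - intros H [x1 [y1 [x2 [y2 [a [b [c [d e]]]]]]]].
    specialize (H x2 y2 x1 y1 c d a b). rewrite (on_line_dist p phi) in H by auto.
    pose proof (Rle_abs (line_coord phi x2 y2 - line_coord phi x1 y1)). lra.
  - intros H x1 y1 x2 y2 a b c d. rewrite (on_line_dist p phi) by auto.
    apply Rabs_le. split; apply Rnot_lt_le; intro hlt; apply H.
    + exists x1, y1, x2, y2. repeat split; auto; lra.
    + exists x2, y2, x1, y1. repeat split; auto; lra.
Qed.

Lemma long_chord_meets n r p phi s : long_chord n r p phi s -> meets n r p phi.
Proof. intros [x1 [y1 [x2 [y2 [a [b _]]]]]]. exists x1, y1; auto. Qed.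

Lemma long_chord_flip n r p phi s : long_chord n r (- p) (phi + PI) s -> long_chord n r p phi s.
Proof.
  intros [x1 [y1 [x2 [y2 [a [b [c [d e]]]]]]]]. rewrite !line_coord_flip in e.
  exists x2, y2, x1, y1. repeat split; auto; try apply on_line_flip; auto; lra.
Qed.

Lemma between_convex_comb p0 p1 p : p0 <= p <= p1 ->
  exists l, 0 <= l <= 1 /\ p = l * p0 + (1 - l) * p1.
Proof.
  intros h. destruct (Req_dec p0 p1) as [<-|e].
  - exists 1. split; lra.
  - exists ((p1 - p) / (p1 - p0)). split; [split|field; lra].
    + apply Rdiv_le_0_compat; lra.
    + apply Rmult_le_reg_r with (p1 - p0); [lra|].
      unfold Rdiv. rewrite Rmult_assoc, Rinv_l by lra. lra.
Qed.

Lemma on_line_comb p1 p2 phi x1 y1 x2 y2 l : on_line p1 phi x1 y1 -> on_line p2 phi x2 y2 ->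
  on_line (l * p1 + (1 - l) * p2) phi (l * x1 + (1 - l) * x2) (l * y1 + (1 - l) * y2).
Proof. unfold on_line. intros <- <-. ring. Qed.

Lemma meets_convex n r phi : convex_set (fun p => meets n r p phi).
Proof.
  intros p0 p1 p [x1 [y1 [a b]]] [x2 [y2 [a' b']]] hp.
  destruct (between_convex_comb _ _ _ hp) as [l [hl ->]].
  exists (l * x1 + (1 - l) * x2), (l * y1 + (1 - l) * y2).
  split; [apply in_polygon_convex | apply on_line_comb]; auto.
Qed.

Lemma long_chord_convex n r phi s : convex_set (fun p => long_chord n r p phi s).
Proof.
  intros p0 p1 p [x1 [y1 [x2 [y2 [a [b [c [d e]]]]]]]]
    [x3 [y3 [x4 [y4 [a' [b' [c' [d' e']]]]]]]] hp.
  destruct (between_convex_comb _ _ _ hp) as [l [hl ->]].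
  exists (l * x1 + (1 - l) * x3), (l * y1 + (1 - l) * y3),
         (l * x2 + (1 - l) * x4), (l * y2 + (1 - l) * y4).
  repeat split; try apply in_polygon_convex; try apply on_line_comb; auto.
  assert (Hc : forall u1 v1 u2 v2, line_coord phi (l * u1 + (1 - l) * u2) (l * v1 + (1 - l) * v2)
                 = l * line_coord phi u1 v1 + (1 - l) * line_coord phi u2 v2)
    by (intros; unfold line_coord; ring).
  rewrite !Hc.
  set (A := line_coord phi x2 y2 - line_coord phi x1 y1) in *.
  set (B := line_coord phi x4 y4 - line_coord phi x3 y3) in *.
  assert (l * (A - s) + (1 - l) * (B - s) > 0)
    by (destruct (Rlt_or_le 0 l); [|replace l with 0 by lra]; nra).
  unfold A, B in *. lra.
Qed.

Lemma sin_sum_identity w b : sin (w - b) * cos (w + b) + cos (w - b) * sin (w + b) = sin (2 * w).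
Proof. rewrite <- sin_plus. f_equal; ring. Qed.

Lemma sin_pair_identity w b : cos w * (sin (w - b) + sin (w + b)) = cos b * sin (2 * w).
Proof. rewrite sin_minus, sin_plus, sin_2a. ring. Qed.

Lemma cos_gap_identity w b : cos b - cos (2 * w - b) = 2 * sin w * sin (w - b).
Proof.
  rewrite cos_minus, sin_minus, cos_2a, sin_2a. pose proof (sin2_cos2 w) as e. unfold Rsqr in e.
  rewrite <- (Rmult_1_r (cos b)) at 1. rewrite <- e. ring.
Qed.

Lemma segment_height n r k1 k2 l A :
  (l * vertex_x n r k1 + (1 - l) * vertex_x n r k2) * cos A +
  (l * vertex_y n r k1 + (1 - l) * vertex_y n r k2) * sin A =
  l * (r * cos (2 * IZR k1 * omega n - A)) + (1 - l) * (r * cos (2 * IZR k2 * omega n - A)).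
Proof. rewrite <- !vertex_height. ring. Qed.

Lemma segment_crosses_line n r k1 k2 phi p :
  let h1 := r * cos (2 * IZR k1 * omega n - phi) in
  let h2 := r * cos (2 * IZR k2 * omega n - phi) in
  h2 < h1 -> h2 <= p <= h1 ->
  exists l, 0 <= l <= 1 /\ on_line p phi
    (l * vertex_x n r k1 + (1 - l) * vertex_x n r k2) (l * vertex_y n r k1 + (1 - l) * vertex_y n r k2).
Proof.
  intros h1 h2 hh hp. exists ((p - h2) / (h1 - h2)). split.
  - split; [apply Rdiv_le_0_compat; lra|].
    apply Rmult_le_reg_r with (h1 - h2); [lra|].
    unfold Rdiv. rewrite Rmult_assoc, Rinv_l by lra. lra.
  - unfold on_line. rewrite segment_height. fold h1 h2. field. lra.
Qed.

(* The depth below the supporting line at which the wedge of half-angles ω ± b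
   (the corner at a vertex seen from direction b) has a chord of length s. *)
Definition cap_depth n s b := s * sin (omega n - b) * sin (omega n + b) / sin (2 * omega n).

(* The corner of the polygon at vertex k, seen from a direction φ = 2kω + b with
   |b| < ω: the supporting line in direction φ touches the polygon at vertex k only,
   and near it the polygon is the wedge between the two sides through vertex k. *)
Section Corner.

Variables (n : nat) (r : R) (k : Z) (b phi : R).
Hypothesis hn : (3 <= n)%nat.
Hypothesis hr : 0 < r.
Hypothesis hb : - omega n < b < omega n.
Hypothesis hphi : phi = 2 * IZR k * omega n + b.

Lemma corner_trig_pos : 0 < sin (omega n - b) /\ 0 < sin (omega n + b).
Proof.
  destruct (omega_facts n hn) as [h0 [h1 _]]. pose proof PI_RGT_0.
  split; apply sin_gt_0; lra.
Qed.

(* How far the neighbouring vertices k + 1 and k - 1 lie below vertex k in direction φ. *)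
Lemma corner_gaps :
  r * cos b - r * cos (2 * omega n - b) = 2 * r * sin (omega n) * sin (omega n - b) /\
  r * cos b - r * cos (2 * omega n + b) = 2 * r * sin (omega n) * sin (omega n + b).
Proof.
  pose proof (cos_gap_identity (omega n) b) as g1.
  pose proof (cos_gap_identity (omega n) (- b)) as g2.
  rewrite cos_neg in g2. replace (2 * omega n - - b) with (2 * omega n + b) in g2 by ring.
  replace (omega n - - b) with (omega n + b) in g2 by ring.
  split; [rewrite <- Rmult_minus_distr_l, g1 | rewrite <- Rmult_minus_distr_l, g2]; ring.
Qed.

Lemma corner_neighbours_below :
  r * cos (2 * omega n - b) < r * cos b /\ r * cos (2 * omega n + b) < r * cos b.
Proof.
  destruct corner_gaps as [g1 g2]. destruct corner_trig_pos as [s1 s2].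
  destruct (omega_trig_pos n hn) as [_ [sw _]].
  assert (0 < r * sin (omega n)) by (apply Rmult_lt_0_compat; lra).
  split; nra.
Qed.

(* The two sides through vertex k, written in the coordinates (p, t) of g(p, φ). *)
Lemma corner_sides p x y : in_polygon n r x y -> on_line p phi x y ->
  p * cos (omega n - b) + line_coord phi x y * sin (omega n - b) <= r * cos (omega n) /\
  p * cos (omega n + b) - line_coord phi x y * sin (omega n + b) <= r * cos (omega n).
Proof.
  intros HP HL. split.
  - pose proof (in_polygon_side n r x y k hn HP) as H. rewrite (on_line_height p phi) in H by auto.
    replace ((2 * IZR k + 1) * omega n - phi) with (omega n - b) in H by (rewrite hphi; ring).
    exact H.
  - pose proof (in_polygon_side n r x y (k - 1) hn HP) as H. rewrite (on_line_height p phi) in H by auto.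
    replace ((2 * IZR (k - 1) + 1) * omega n - phi) with (- (omega n + b)) in H
      by (rewrite hphi, minus_IZR; simpl; ring).
    rewrite cos_neg, sin_neg in H. lra.
Qed.

(* The width of the wedge at depth r cos b - p, as a combination of the two sides. *)
Lemma wedge_identity p :
  (r * cos b - p) * sin (2 * omega n) =
  sin (omega n + b) * (r * cos (omega n) - p * cos (omega n - b)) +
  sin (omega n - b) * (r * cos (omega n) - p * cos (omega n + b)).
Proof.
  replace ((r * cos b - p) * sin (2 * omega n)) with
    (r * (cos b * sin (2 * omega n)) - p * sin (2 * omega n)) by ring.
  rewrite <- (sin_pair_identity (omega n) b), <- (sin_sum_identity (omega n) b). ring.
Qed.

Lemma wedge_width p ta tb :
  ta * sin (omega n - b) <= r * cos (omega n) - p * cos (omega n - b) ->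
  - tb * sin (omega n + b) <= r * cos (omega n) - p * cos (omega n + b) ->
  (ta - tb) * (sin (omega n - b) * sin (omega n + b)) <= (r * cos b - p) * sin (2 * omega n).
Proof.
  intros ha hb'. destruct corner_trig_pos as [s1 s2]. rewrite wedge_identity.
  apply Rmult_le_compat_l with (r := sin (omega n + b)) in ha; [|lra].
  apply Rmult_le_compat_l with (r := sin (omega n - b)) in hb'; [|lra].
  lra.
Qed.

Lemma wedge_width_eq p ta tb :
  ta * sin (omega n - b) = r * cos (omega n) - p * cos (omega n - b) ->
  - tb * sin (omega n + b) = r * cos (omega n) - p * cos (omega n + b) ->
  (ta - tb) * (sin (omega n - b) * sin (omega n + b)) = (r * cos b - p) * sin (2 * omega n).
Proof. intros ha hb'. rewrite wedge_identity, <- ha, <- hb'. ring. Qed.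

Lemma corner_support p : meets n r p phi -> p <= r * cos b.
Proof.
  intros [x [y [HP HL]]]. destruct (corner_sides p x y HP HL) as [c1 c2].
  destruct (omega_trig_pos n hn) as [s0 _].
  pose proof (wedge_width p (line_coord phi x y) (line_coord phi x y)) as W.
  rewrite Rminus_diag, Rmult_0_l in W.
  assert (0 <= (r * cos b - p) * sin (2 * omega n)) by (apply W; lra).
  nra.
Qed.

Lemma cap_depth_nonneg s : 0 <= s -> 0 <= cap_depth n s b.
Proof.
  intros hs. destruct corner_trig_pos. destruct (omega_trig_pos n hn) as [h0 _].
  unfold cap_depth. apply Rdiv_le_0_compat; auto. apply Rmult_le_pos; [apply Rmult_le_pos|]; lra.
Qed.

Lemma corner_chord_short p s : 0 <= s ->
  r * cos b - cap_depth n s b <= p -> chord_le n r p phi s.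
Proof.
  intros hs hp x1 y1 x2 y2 P1 L1 P2 L2.
  rewrite (on_line_dist p phi) by auto.
  destruct (corner_sides p x1 y1 P1 L1) as [c1 c2].
  destruct (corner_sides p x2 y2 P2 L2) as [d1 d2].
  destruct corner_trig_pos as [s1 s2]. destruct (omega_trig_pos n hn) as [s0 _].
  assert (hS : 0 < sin (omega n - b) * sin (omega n + b)) by (apply Rmult_lt_0_compat; lra).
  assert (hK : (r * cos b - p) * sin (2 * omega n) <= s * (sin (omega n - b) * sin (omega n + b))).
  { replace (s * _) with (cap_depth n s b * sin (2 * omega n)) by (unfold cap_depth; field; lra).
    apply Rmult_le_compat_r; lra. }
  assert (W : forall ta tb,
            ta * sin (omega n - b) <= r * cos (omega n) - p * cos (omega n - b) ->
            - tb * sin (omega n + b) <= r * cos (omega n) - p * cos (omega n + b) -> ta - tb <= s).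
  { intros ta tb ha hb'. apply Rmult_le_reg_r with (1 := hS).
    eapply Rle_trans; [apply (wedge_width p ta tb ha hb') | exact hK]. }
  apply Rabs_le. split; [assert (line_coord phi x2 y2 - line_coord phi x1 y1 <= s) by (apply W; lra) |
                        apply W]; lra.
Qed.

Lemma corner_edge_right p : r * cos (2 * omega n - b) <= p <= r * cos b ->
  exists x y, in_polygon n r x y /\ on_line p phi x y /\
    p * cos (omega n - b) + line_coord phi x y * sin (omega n - b) = r * cos (omega n).
Proof.
  intros hp.
  assert (Hk : 2 * IZR k * omega n - phi = - b) by (rewrite hphi; ring).
  assert (Hk1 : 2 * IZR (k + 1) * omega n - phi = 2 * omega n - b)
    by (rewrite hphi, plus_IZR; ring).
  destruct (segment_crosses_line n r k (k + 1) phi p) as [l [hl HL]];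
    rewrite ?Hk, ?Hk1, ?cos_neg; [apply corner_neighbours_below | lra |].
  eexists; eexists; split; [|split; [exact HL|]].
  - apply in_polygon_convex; auto; apply vertex_in_polygon; auto.
  - replace (omega n - b) with ((2 * IZR k + 1) * omega n - phi) by (rewrite hphi; ring).
    rewrite <- (on_line_height _ _ _ _ _ HL), segment_height.
    replace (2 * IZR k * omega n - (2 * IZR k + 1) * omega n) with (- omega n) by ring.
    replace (2 * IZR (k + 1) * omega n - (2 * IZR k + 1) * omega n) with (omega n)
      by (rewrite plus_IZR; ring).
    rewrite cos_neg. ring.
Qed.

Lemma corner_edge_left p : r * cos (2 * omega n + b) <= p <= r * cos b ->
  exists x y, in_polygon n r x y /\ on_line p phi x y /\
    p * cos (omega n + b) - line_coord phi x y * sin (omega n + b) = r * cos (omega n).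
Proof.
  intros hp.
  assert (Hk : 2 * IZR k * omega n - phi = - b) by (rewrite hphi; ring).
  assert (Hk1 : 2 * IZR (k - 1) * omega n - phi = - (2 * omega n + b))
    by (rewrite hphi, minus_IZR; simpl; ring).
  destruct (segment_crosses_line n r k (k - 1) phi p) as [l [hl HL]];
    rewrite ?Hk, ?Hk1, ?cos_neg; [apply corner_neighbours_below | lra |].
  eexists; eexists; split; [|split; [exact HL|]].
  - apply in_polygon_convex; auto; apply vertex_in_polygon; auto.
  - match goal with |- _ - ?t * _ = _ =>
      transitivity (p * cos (- (omega n + b)) + t * sin (- (omega n + b)));
      [rewrite cos_neg, sin_neg; ring|] end.
    replace (- (omega n + b)) with ((2 * IZR k - 1) * omega n - phi) by (rewrite hphi; ring).
    rewrite <- (on_line_height _ _ _ _ _ HL), segment_height.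
    replace (2 * IZR k * omega n - (2 * IZR k - 1) * omega n) with (omega n) by ring.
    replace (2 * IZR (k - 1) * omega n - (2 * IZR k - 1) * omega n) with (- omega n)
      by (rewrite minus_IZR; simpl; ring).
    rewrite cos_neg. ring.
Qed.

(* Below the cap but above both neighbouring vertices, the chord is longer than s:
   its endpoints are on the two sides through vertex k. *)
Lemma corner_long_chord p s : 0 <= s ->
  r * cos (2 * omega n - b) <= p -> r * cos (2 * omega n + b) <= p ->
  p < r * cos b - cap_depth n s b -> long_chord n r p phi s.
Proof.
  intros hs hp1 hp2 hp3. destruct corner_trig_pos as [s1 s2]. destruct (omega_trig_pos n hn) as [s0 _].
  assert (hS : 0 < sin (omega n - b) * sin (omega n + b)) by (apply Rmult_lt_0_compat; lra).
  pose proof (cap_depth_nonneg s hs).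
  destruct (corner_edge_right p) as [x2 [y2 [P2 [L2 E2]]]]; [lra|].
  destruct (corner_edge_left p) as [x1 [y1 [P1 [L1 E1]]]]; [lra|].
  exists x1, y1, x2, y2. repeat split; auto.
  apply Rlt_gt, Rmult_lt_reg_r with (1 := hS).
  rewrite (wedge_width_eq p) by lra.
  replace (s * _) with (cap_depth n s b * sin (2 * omega n)) by (unfold cap_depth; field; lra).
  apply Rmult_lt_compat_r; lra.
Qed.

End Corner.

Definition cap_above_neighbours n r s b :=
  r * cos (2 * omega n - b) < r * cos b - cap_depth n s b /\
  r * cos (2 * omega n + b) < r * cos b - cap_depth n s b.

(* The lines of a fixed direction φ with a chord of length at most s.  Vertex k is
   the top vertex in direction φ = 2kω + b and vertex k' the top vertex in the
   opposite direction φ + π = 2k'ω + b'. *)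
Section Short_chords_of_direction.

Variables (n : nat) (r s : R) (k k' : Z) (b b' phi : R).
Hypothesis hn : (3 <= n)%nat.
Hypothesis hr : 0 < r.
Hypothesis hs : 0 <= s.
Hypothesis hb : - omega n < b < omega n.
Hypothesis hphi : phi = 2 * IZR k * omega n + b.
Hypothesis hb' : - omega n < b' < omega n.
Hypothesis hphi' : phi + PI = 2 * IZR k' * omega n + b'.
Hypothesis hcap : cap_above_neighbours n r s b.
Hypothesis hcap' : cap_above_neighbours n r s b'.

(* The two caps: near the top vertex, and (in the coordinate p) near the bottom one. *)
Definition top_cap p := r * cos b - cap_depth n s b <= p <= r * cos b.
Definition bottom_cap p := - (r * cos b') <= p <= - (r * cos b') + cap_depth n s b'.

Lemma caps_short p : top_cap p \/ bottom_cap p -> meets n r p phi /\ chord_le n r p phi s.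
Proof.
  pose proof (cap_depth_nonneg n b hn hb s hs). pose proof (cap_depth_nonneg n b' hn hb' s hs).
  destruct (corner_neighbours_below n r b hn hr hb).
  destruct (corner_neighbours_below n r b' hn hr hb').
  destruct hcap, hcap'.
  intros [hp|hp]; unfold top_cap, bottom_cap in hp; split.
  - destruct (corner_edge_right n r k b phi hn hr hb hphi p) as [x [y [? [? _]]]]; [lra|].
    exists x, y; auto.
  - apply (corner_chord_short n r k b phi hn hb hphi p s); lra.
  - apply meets_flip.
    destruct (corner_edge_right n r k' b' (phi + PI) hn hr hb' hphi' (- p)) as [x [y [? [? _]]]];
      [lra|]. exists x, y; auto.
  - apply chord_le_flip, (corner_chord_short n r k' b' (phi + PI) hn hb' hphi' (- p) s); lra.
Qed.

(* Every line strictly between the two caps has a chord longer than s: near each cap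
   by [corner_long_chord], and in between by convexity of [long_chord]. *)
Lemma between_caps_long p :
  - (r * cos b') + cap_depth n s b' < p < r * cos b - cap_depth n s b -> long_chord n r p phi s.
Proof.
  intros hp. destruct hcap as [g1 g2]. destruct hcap' as [g1' g2'].
  set (m := Rmax (r * cos (2 * omega n - b)) (r * cos (2 * omega n + b))).
  set (m' := Rmax (r * cos (2 * omega n - b')) (r * cos (2 * omega n + b'))).
  assert (W : forall q, m <= q < r * cos b - cap_depth n s b -> long_chord n r q phi s).
  { intros q hq. apply (corner_long_chord n r k b phi hn hr hb hphi q s hs); unfold m in hq; minmax_lra. }
  assert (W' : forall q, m' <= - q < r * cos b' - cap_depth n s b' -> long_chord n r q phi s).
  { intros q hq. apply long_chord_flip.
    apply (corner_long_chord n r k' b' (phi + PI) hn hr hb' hphi' (- q) s hs); unfold m' in hq; minmax_lra. }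
  assert (hm : m < r * cos b - cap_depth n s b) by (unfold m; minmax_lra).
  assert (hm' : m' < r * cos b' - cap_depth n s b') by (unfold m'; minmax_lra).
  destruct (Rle_or_lt m p); [apply W; lra|].
  destruct (Rle_or_lt m' (- p)); [apply W'; lra|].
  apply (long_chord_convex n r phi s (- m') m p); [apply W' | apply W | ]; lra.
Qed.

Lemma caps_disjoint : - (r * cos b') + cap_depth n s b' < r * cos b - cap_depth n s b.
Proof.
  apply Rnot_le_lt. intro hc. destruct hcap as [g1 g2].
  (* A line just below the top cap has a long chord, yet would lie in the bottom cap. *)
  set (m := Rmax (r * cos (2 * omega n - b)) (r * cos (2 * omega n + b))).
  set (p := (m + (r * cos b - cap_depth n s b)) / 2).
  assert (hp : m <= p < r * cos b - cap_depth n s b) by (unfold p, m; minmax_lra).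
  assert (L : long_chord n r p phi s)
    by (apply (corner_long_chord n r k b phi hn hr hb hphi p s hs); unfold m in hp; minmax_lra).
  assert (hp' : - p <= r * cos b').
  { apply (corner_support n r k' b' (phi + PI) hn hb' hphi'), meets_flip.
    apply (long_chord_meets n r p phi s L). }
  assert (B : bottom_cap p) by (unfold bottom_cap; lra).
  exact (proj1 (chord_le_iff n r p phi s) (proj2 (caps_short p (or_intror B))) L).
Qed.

Lemma short_chords_iff p : meets n r p phi /\ chord_le n r p phi s <-> top_cap p \/ bottom_cap p.
Proof.
  split; [|apply caps_short]. intros [HM HC].
  assert (u : p <= r * cos b) by (apply (corner_support n r k b phi hn hb hphi); auto).
  assert (u' : - p <= r * cos b')
    by (apply (corner_support n r k' b' (phi + PI) hn hb' hphi'), meets_flip; auto).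
  apply NNPP. intro hno. apply (proj1 (chord_le_iff n r p phi s) HC), between_caps_long.
  unfold top_cap, bottom_cap in hno. split; apply Rnot_le_lt; intro; apply hno; [right|left]; lra.
Qed.

Lemma short_chords_integral :
  is_RInt (fun p => Defs.ind (meets n r p phi /\ chord_le n r p phi s)) 0 r
    (Rmin (cap_depth n s b) (r * cos b) + Rmax 0 (cap_depth n s b' - r * cos b')).
Proof.
  pose proof caps_disjoint as D.
  destruct (omega_facts n hn) as [h0 [h1 _]]. pose proof PI_RGT_0.
  assert (cb : 0 < cos b <= 1) by (split; [apply cos_gt_0 | apply COS_bound]; lra).
  assert (cb' : 0 < cos b' <= 1) by (split; [apply cos_gt_0 | apply COS_bound]; lra).
  pose proof (cap_depth_nonneg n b hn hb s hs). pose proof (cap_depth_nonneg n b' hn hb' s hs).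
  assert (Hsplit : forall p, Defs.ind (top_cap p) + Defs.ind (bottom_cap p) =
                            Defs.ind (meets n r p phi /\ chord_le n r p phi s)).
  { intros p. destruct (classic (top_cap p)) as [ht|ht].
    - rewrite (ind_of_true (top_cap p)), (ind_of_false (bottom_cap p)), ind_of_true; auto.
      + ring.
      + apply short_chords_iff; auto.
      + unfold top_cap, bottom_cap in *; lra.
    - rewrite (ind_of_false (top_cap p)) by auto.
      destruct (classic (bottom_cap p)) as [hb0|hb0].
      + rewrite (ind_of_true (bottom_cap p)), ind_of_true; auto; [ring|apply short_chords_iff; auto].
      + rewrite (ind_of_false (bottom_cap p)), ind_of_false; auto; [ring|].
        rewrite short_chords_iff. tauto. }
  apply is_RInt_ext with (fun p => Defs.ind (top_cap p) + Defs.ind (bottom_cap p));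
    [intros p _; apply Hsplit|].
  replace (Rmin (cap_depth n s b) (r * cos b) + Rmax 0 (cap_depth n s b' - r * cos b')) with
      ((clamp 0 r (r * cos b) - clamp 0 r (r * cos b - cap_depth n s b)) +
       (clamp 0 r (- (r * cos b') + cap_depth n s b') - clamp 0 r (- (r * cos b')))).
  - apply is_RInt_Rplus; apply is_RInt_ind_interval; lra.
  - assert (r * cos b <= r) by nra. assert (0 < r * cos b') by nra. assert (0 < r * cos b) by nra.
    unfold clamp. minmax_lra.
Qed.

End Short_chords_of_direction.

Lemma direction_decomp n x : (3 <= n)%nat ->
  exists k b, x = 2 * IZR k * omega n + b /\ - omega n <= b < omega n.
Proof.
  intros hn. destruct (omega_facts n hn) as [h0 _].
  set (y := x / (2 * omega n) - 1 / 2). destruct (archimed y) as [a1 a2].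
  exists (up y), (x - 2 * IZR (up y) * omega n). split; [ring|].
  assert (e : x = (x / (2 * omega n)) * (2 * omega n)) by (field; lra).
  unfold y in *. split; nra.
Qed.

(* Directions that are not multiples of ω/2: for them the top vertex is unique and the
   caps avoid the degenerate configurations b = ±ω/2. *)
Definition generic_direction n phi := forall j : Z, phi <> IZR j * (omega n / 2).

Lemma generic_direction_decomp n phi : (3 <= n)%nat -> generic_direction n phi ->
  exists k b, phi = 2 * IZR k * omega n + b /\ - omega n < b < omega n /\
    b <> omega n / 2 /\ b <> - (omega n / 2).
Proof.
  intros hn hg. destruct (direction_decomp n phi hn) as [k [b [e [[hb|hb] hb2]]]].
  - exists k, b. split; [exact e|]. split; [lra|split].
    + intro hb'. apply (hg (4 * k + 1)%Z). rewrite e, plus_IZR, mult_IZR, hb'. simpl. field.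
    + intro hb'. apply (hg (4 * k - 1)%Z). rewrite e, minus_IZR, mult_IZR, hb'. simpl. field.
  - exfalso. apply (hg (4 * k - 2)%Z). rewrite e, minus_IZR, mult_IZR, <- hb. simpl. field.
Qed.

Lemma generic_direction_opposite n phi : (3 <= n)%nat ->
  generic_direction n phi -> generic_direction n (phi + PI).
Proof.
  intros hn hg j e. apply (hg (j - 2 * Z.of_nat n)%Z).
  destruct (omega_facts n hn) as [_ [_ hnw]].
  rewrite minus_IZR, mult_IZR, <- INR_IZR_INZ. rewrite <- hnw in e. simpl.
  replace phi with (phi + INR n * omega n - INR n * omega n) by ring. rewrite e. field.
Qed.

Definition small_chord n r s :=
  if Nat.eqb n 3 then s <= 2 * r * (cos (PI / (2 * INR n))) ^ 2
  else s <= 2 * r * sin (PI / INR n).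

Lemma sin_lt_1 g : 0 < g < PI -> g <> PI / 2 -> sin g < 1.
Proof.
  intros hg hne. rewrite <- cos_shift, <- cos_0.
  destruct (Rlt_or_le 0 (PI / 2 - g)) as [h|h].
  - apply cos_decreasing_1; lra.
  - rewrite <- (cos_neg (PI / 2 - g)). apply cos_decreasing_1; lra.
Qed.

(* The key inequality behind [cap_above_neighbours]: for 0 < γ < 2ω, γ ≠ 3ω/2,
   s sin γ < 2 r sin ω sin 2ω.  For n >= 4 it follows from s <= 2 r sin ω and
   sin γ < sin 2ω; for the triangle s <= 3r/2 and sin γ < 1 = 4 sin ω sin 2ω / 3. *)
Lemma small_chord_sin_bound n r s g : (3 <= n)%nat -> 0 < r -> 0 <= s -> small_chord n r s ->
  0 < g < 2 * omega n -> g <> 3 * (omega n / 2) ->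
  s * sin g < 2 * r * sin (omega n) * sin (2 * omega n).
Proof.
  intros hn hr hs hS hg hne. pose proof PI_RGT_0. unfold small_chord in hS.
  destruct (omega_facts n hn) as [h0 [h1 _]]. destruct (omega_trig_pos n hn) as [s0 [sw cw]].
  assert (sg : 0 < sin g) by (apply sin_gt_0; lra).
  assert (0 < 2 * r * sin (omega n) * sin (2 * omega n)) by (repeat apply Rmult_lt_0_compat; lra).
  destruct (Nat.eqb_spec n 3) as [->|e].
  - assert (o : omega 3 = PI / 3) by (unfold omega; simpl; f_equal; ring).
    replace (PI / (2 * INR 3)) with (PI / 6) in hS by (simpl; field).
    rewrite cos_PI6 in hS. rewrite o in *. rewrite sin_PI3, sin_2PI3.
    assert (e3 : sqrt 3 * sqrt 3 = 3) by (apply sqrt_sqrt; lra).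
    replace (2 * r * (sqrt 3 / 2) ^ 2) with (r * (sqrt 3 * sqrt 3) / 2) in hS by field.
    replace (2 * r * (sqrt 3 / 2) * (sqrt 3 / 2)) with (r * (sqrt 3 * sqrt 3) / 2) by field.
    rewrite e3 in *.
    assert (sin g < 1) by (apply sin_lt_1; lra).
    destruct hs as [hs|<-]; nra.
  - assert (h4 : 4 <= INR n) by (replace 4 with (INR 4) by (simpl; ring); apply le_INR; lia).
    assert (w4 : omega n <= PI / 4).
    { unfold omega, Rdiv. apply Rmult_le_compat_l; [lra|]. apply Rinv_le_contravar; lra. }
    assert (sin g < sin (2 * omega n)) by (apply sin_increasing_1; lra).
    fold (omega n) in hS. destruct hs as [hs|<-]; [|nra].
    apply Rlt_le_trans with (s * sin (2 * omega n)); [nra|].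
    apply Rmult_le_compat_r; lra.
Qed.

Lemma small_chord_caps n r s b : (3 <= n)%nat -> 0 < r -> 0 <= s -> small_chord n r s ->
  - omega n < b < omega n -> b <> omega n / 2 -> b <> - (omega n / 2) ->
  cap_above_neighbours n r s b.
Proof.
  intros hn hr hs hS hb hb1 hb2.
  destruct (corner_trig_pos n b hn hb) as [s1 s2]. destruct (omega_trig_pos n hn) as [s0 _].
  destruct (corner_gaps n r b) as [g1 g2].
  assert (c1 := small_chord_sin_bound n r s (omega n + b) hn hr hs hS ltac:(lra) ltac:(lra)).
  assert (c2 := small_chord_sin_bound n r s (omega n - b) hn hr hs hS ltac:(lra) ltac:(lra)).
  unfold cap_above_neighbours. split.
  - assert (cap_depth n s b < 2 * r * sin (omega n) * sin (omega n - b)); [|lra].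
    apply Rmult_lt_reg_r with (sin (2 * omega n)); auto. unfold cap_depth, Rdiv.
    rewrite Rmult_assoc, Rinv_l by lra. nra.
  - assert (cap_depth n s b < 2 * r * sin (omega n) * sin (omega n + b)); [|lra].
    apply Rmult_lt_reg_r with (sin (2 * omega n)); auto. unfold cap_depth, Rdiv.
    rewrite Rmult_assoc, Rinv_l by lra. nra.
Qed.

Fixpoint max_upto (f : nat -> R) (m : nat) : R :=
  match m with O => f O | S m' => Rmax (max_upto f m') (f (S m')) end.

Lemma max_upto_ge f m j : (j <= m)%nat -> f j <= max_upto f m.
Proof.
  induction m; intros h; simpl.
  - replace j with O by lia. lra.
  - destruct (Nat.eq_dec j (S m)) as [->|e]; [apply Rmax_r|].
    eapply Rle_trans; [apply IHm; lia | apply Rmax_l].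
Qed.

Lemma max_upto_le f m c : (forall j, (j <= m)%nat -> f j <= c) -> max_upto f m <= c.
Proof.
  induction m; intros h; simpl; [apply h; lia|].
  apply Rmax_lub; [apply IHm; intros; apply h | apply h]; lia.
Qed.

(* The support function of the polygon, divided by r: the largest height of a vertex
   in direction φ. *)
Definition support_cos n phi := max_upto (fun j => cos (phi - 2 * INR j * omega n)) (n - 1).

Lemma support_cos_eq n k b phi : (3 <= n)%nat -> - omega n <= b <= omega n ->
  phi = 2 * IZR k * omega n + b -> support_cos n phi = cos b.
Proof.
  intros hn hb ->. apply Rle_antisym.
  - apply max_upto_le. intros j hj.
    replace (2 * IZR k * omega n + b - 2 * INR j * omega n) with (b + 2 * IZR (k - Z.of_nat j) * omega n)
      by (rewrite minus_IZR, <- INR_IZR_INZ; ring).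
    apply cos_even_shift_le; auto.
  - destruct (rotation_reduce n k b hn) as [q [j [hj e]]].
    eapply Rle_trans; [| apply (max_upto_ge _ _ (Z.to_nat j)); lia]. cbv beta.
    right. rewrite <- (cos_period_Z b q). f_equal.
    rewrite INR_IZR_INZ, Z2Nat.id by lia. lra.
Qed.

Lemma support_cos_continuous n x : continuous (support_cos n) x.
Proof.
  unfold support_cos. generalize (n - 1)%nat. intros m. induction m; simpl.
  - apply continuous_cos_comp, continuous_Rminus; [apply continuous_id | apply continuous_const].
  - apply continuous_Rmax; auto.
    apply continuous_cos_comp, continuous_Rminus; [apply continuous_id | apply continuous_const].
Qed.

Lemma support_cos_periodic n x (m : Z) : (3 <= n)%nat ->
  support_cos n (x + 2 * IZR m * omega n) = support_cos n x.
Proof.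
  intros hn. destruct (direction_decomp n x hn) as [k [b [e hb]]].
  rewrite (support_cos_eq n k b x), (support_cos_eq n (k + m) b); auto; try lra.
  rewrite e, plus_IZR. ring.
Qed.

Lemma support_cos_periodic_2PI n x : (3 <= n)%nat -> support_cos n (x + 2 * PI) = support_cos n x.
Proof.
  intros hn. destruct (omega_facts n hn) as [_ [_ hnw]].
  rewrite <- (support_cos_periodic n x (Z.of_nat n) hn), <- INR_IZR_INZ, <- hnw. f_equal; ring.
Qed.

Lemma cap_depth_cos n s b : cap_depth n s b = s * (cos b ^ 2 - cos (omega n) ^ 2) / sin (2 * omega n).
Proof.
  unfold cap_depth. f_equal. rewrite sin_minus, sin_plus.
  pose proof (sin2_cos2 b) as eb. pose proof (sin2_cos2 (omega n)) as ew. unfold Rsqr in *.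
  transitivity (s * (sin (omega n) * sin (omega n) * (cos b * cos b) -
                     cos (omega n) * cos (omega n) * (sin b * sin b))); [ring|].
  replace (sin b * sin b) with (1 - cos b * cos b) by lra.
  replace (sin (omega n) * sin (omega n)) with (1 - cos (omega n) * cos (omega n)) by lra.
  ring.
Qed.

Lemma cap_depth_continuous n s x : continuous (cap_depth n s) x.
Proof.
  unfold cap_depth.
  apply continuous_ext with (fun b => s * sin (omega n - b) * sin (omega n + b) * / sin (2 * omega n));
    [reflexivity|].
  repeat apply continuous_Rmult; try apply continuous_const;
    apply (continuous_comp _ sin), continuous_sin;
    [apply continuous_Rminus | apply continuous_Rplus]; apply continuous_id || apply continuous_const.
Qed.

(* The cap depth at the top vertex in direction φ, as a function of φ. *)
Definition cap_fun n s phi :=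
  s * (support_cos n phi ^ 2 - cos (omega n) ^ 2) / sin (2 * omega n).

Lemma cap_fun_eq n s k b phi : (3 <= n)%nat -> - omega n <= b <= omega n ->
  phi = 2 * IZR k * omega n + b -> cap_fun n s phi = cap_depth n s b.
Proof. intros. unfold cap_fun. rewrite cap_depth_cos, (support_cos_eq n k b phi); auto. Qed.

Lemma cap_fun_continuous n s x : continuous (cap_fun n s) x.
Proof.
  unfold cap_fun.
  assert (E : forall m : R, s * (m * m - cos (omega n) ^ 2) * / sin (2 * omega n) =
                           s * (m ^ 2 - cos (omega n) ^ 2) / sin (2 * omega n))
    by (intros; unfold Rdiv; ring).
  apply continuous_ext with (fun y => s * (support_cos n y * support_cos n y - cos (omega n) ^ 2) * / sin (2 * omega n));
    [intros; apply E|].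
  repeat apply continuous_Rmult; try apply continuous_const.
  apply continuous_Rminus; [apply continuous_Rmult; apply support_cos_continuous | apply continuous_const].
Qed.

(* The measure of the lines in direction φ with a chord of length at most s, in the
   regime of the theorem: the top cap (cut at p = 0) and the overflow of the bottom cap. *)
Definition section_fun n r s phi :=
  Rmin (cap_fun n s phi) (r * support_cos n phi) +
  Rmax 0 (cap_fun n s (phi + PI) - r * support_cos n (phi + PI)).

Lemma section_fun_continuous n r s x : continuous (section_fun n r s) x.
Proof.
  assert (shift : forall f : R -> R, (forall y, continuous f y) -> continuous (fun y => f (y + PI)) x).
  { intros f Hf. apply (continuous_comp (fun y => y + PI) f); [|apply Hf].
    apply continuous_Rplus; [apply continuous_id | apply continuous_const]. }
  unfold section_fun. apply continuous_Rplus.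
  - apply continuous_Rmin; [apply cap_fun_continuous|].
    apply continuous_Rmult; [apply continuous_const | apply support_cos_continuous].
  - apply continuous_Rmax; [apply continuous_const|]. apply continuous_Rminus.
    + apply (shift (cap_fun n s)), cap_fun_continuous.
    + apply (shift (fun y => r * support_cos n y)). intros y.
      apply continuous_Rmult; [apply continuous_const | apply support_cos_continuous].
Qed.

(* The integral of the cap depth over the directions in which a given vertex is on top. *)
Definition corner_integral n s :=
  s * (omega n + sin (omega n) * cos (omega n) - 2 * omega n * cos (omega n) ^ 2) / sin (2 * omega n).

Lemma cap_depth_integral n s : (3 <= n)%nat ->
  is_RInt (cap_depth n s) (- omega n) (omega n) (corner_integral n s).
Proof.
  intros hn. destruct (omega_trig_pos n hn) as [s0 _].
  (* An antiderivative, from cos² b = (b + sin b cos b)' / 2. *)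
  set (F := fun b => s * ((b + sin b * cos b) / 2 - b * cos (omega n) ^ 2) / sin (2 * omega n)).
  replace (corner_integral n s) with (minus (F (omega n)) (F (- omega n))).
  - apply (is_RInt_derive F (cap_depth n s)); [|intros; apply cap_depth_continuous].
    intros x _. unfold F. auto_derive; [lra|].
    rewrite cap_depth_cos. pose proof (sin2_cos2 x) as e. unfold Rsqr in e.
    replace (sin x * (1 * - sin x)) with (- (1 - cos x * cos x)) by lra. field. lra.
  - unfold minus, plus, opp; simpl. unfold F, corner_integral. rewrite sin_neg, cos_neg. field. lra.
Qed.

(* Over one rotation period [0, 2ω]: the pieces [0, ω] and [ω, 2ω] are the two halves
   of the corner integral (vertices 0 and 1 on top). *)
Lemma cap_fun_period_integral n s : (3 <= n)%nat ->
  is_RInt (cap_fun n s) 0 (2 * omega n) (corner_integral n s).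
Proof.
  intros hn. destruct (omega_facts n hn) as [h0 _].
  assert (ex : forall a c, ex_RInt (cap_depth n s) a c)
    by (intros a c; exact (ex_RInt_continuous _ a c (fun z _ => cap_depth_continuous n s z))).
  replace (corner_integral n s) with (RInt (cap_depth n s) 0 (omega n) + RInt (cap_depth n s) (- omega n) 0).
  - apply (is_RInt_Chasles _ 0 (omega n) (2 * omega n)
             (RInt (cap_depth n s) 0 (omega n)) (RInt (cap_depth n s) (- omega n) 0)).
    + apply is_RInt_ext with (cap_depth n s); [|exact (RInt_correct _ _ _ (ex _ _))].
      intros x hx. symmetry. apply (cap_fun_eq n s 0 x x); auto; [minmax_lra | simpl; ring].
    + apply is_RInt_ext with (fun y => cap_depth n s (y + - (2 * omega n))).
      * intros x hx. symmetry. apply (cap_fun_eq n s 1 (x + - (2 * omega n)) x); auto;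
          [minmax_lra | simpl; ring].
      * apply is_RInt_shift. replace (omega n + - (2 * omega n)) with (- omega n) by ring.
        replace (2 * omega n + - (2 * omega n)) with 0 by ring. exact (RInt_correct _ _ _ (ex _ _)).
  - rewrite Rplus_comm. rewrite (RInt_Chasles (cap_depth n s)) by apply ex.
    exact (is_RInt_unique _ _ _ _ (cap_depth_integral n s hn)).
Qed.

(* By rotation invariance, the integral of the cap depth over all directions is n
   times the corner integral. *)
Lemma cap_fun_total n s : (3 <= n)%nat ->
  is_RInt (cap_fun n s) 0 (2 * PI) (INR n * corner_integral n s).
Proof.
  intros hn. destruct (omega_facts n hn) as [_ [_ hnw]].
  replace (2 * PI) with (INR n * (2 * omega n)) by (rewrite <- hnw; ring).
  rewrite <- (is_RInt_unique _ _ _ _ (cap_fun_period_integral n s hn)).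
  apply is_RInt_periodic; [intros; apply cap_fun_continuous|].
  intros x. pose proof (support_cos_periodic n x 1 hn) as P.
  replace (2 * IZR 1 * omega n) with (2 * omega n) in P by (simpl; ring).
  unfold cap_fun. rewrite P. reflexivity.
Qed.

(* Opposite directions share their lines: the top cap at φ plus the overflow of the
   bottom cap at φ + π is the full cap depth, so [section_fun] and [cap_fun] have the
   same integral over all directions. *)
Lemma section_fun_total n r s : (3 <= n)%nat ->
  is_RInt (section_fun n r s) 0 (2 * PI) (INR n * corner_integral n s).
Proof.
  intros hn.
  assert (pair : forall x, section_fun n r s x + section_fun n r s (x + PI) =
                           cap_fun n s x + cap_fun n s (x + PI)).
  { intros x. unfold section_fun, cap_fun.
    replace (x + PI + PI) with (x + 2 * PI) by ring. rewrite support_cos_periodic_2PI by auto.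
    minmax_lra. }
  pose proof (is_RInt_fold (section_fun n r s) PI (section_fun_continuous n r s)) as A.
  rewrite (RInt_ext _ (fun x => cap_fun n s x + cap_fun n s (x + PI))) in A by (intros; apply pair).
  pose proof (is_RInt_fold (cap_fun n s) PI (cap_fun_continuous n s)) as B.
  rewrite <- (is_RInt_unique _ _ _ _ B) in A.
  rewrite (is_RInt_unique _ _ _ _ (cap_fun_total n s hn)) in A. exact A.
Qed.

Definition short_chord_ind n r s phi p := Defs.ind (meets n r p phi /\ chord_le n r p phi s).

(* For each φ the inner integrand is the difference of the indicators of two convex
   sets of p, hence integrable. *)
Lemma short_chord_ind_integrable n r s phi : 0 < r -> ex_RInt (short_chord_ind n r s phi) 0 r.
Proof.
  intros hr.
  destruct (ex_RInt_ind_convex (fun p => meets n r p phi) 0 r ltac:(lra) (meets_convex n r phi)) as [v1 H1].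
  destruct (ex_RInt_ind_convex (fun p => long_chord n r p phi s) 0 r ltac:(lra)
              (long_chord_convex n r phi s)) as [v2 H2].
  assert (diff : forall p, Defs.ind (meets n r p phi) - Defs.ind (long_chord n r p phi s) =
                           short_chord_ind n r s phi p).
  { intros p. unfold short_chord_ind. pose proof (chord_le_iff n r p phi s) as C.
    destruct (classic (long_chord n r p phi s)) as [hl|hl].
    - pose proof (long_chord_meets n r p phi s hl).
      rewrite (ind_of_true (long_chord _ _ _ _ _)), (ind_of_true (meets _ _ _ _)), ind_of_false
        by tauto. ring.
    - rewrite (ind_of_false (long_chord _ _ _ _ _)) by auto.
      destruct (classic (meets n r p phi)) as [hm|hm].
      + rewrite (ind_of_true (meets _ _ _ _)), ind_of_true by tauto. ring.
      + rewrite (ind_of_false (meets _ _ _ _)), ind_of_false by tauto. ring. }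
  exists (v1 - v2). apply is_RInt_ext with (fun p => Defs.ind (meets n r p phi) - Defs.ind (long_chord n r p phi s));
    [intros p _; apply diff | apply is_RInt_Rminus; assumption].
Qed.

Lemma short_chord_section n r s phi : (3 <= n)%nat -> 0 < r -> 0 <= s -> small_chord n r s ->
  generic_direction n phi -> RInt (short_chord_ind n r s phi) 0 r = section_fun n r s phi.
Proof.
  intros hn hr hs hS hg.
  destruct (generic_direction_decomp n phi hn hg) as [k [b [e [hb [hb1 hb2]]]]].
  destruct (generic_direction_decomp n (phi + PI) hn (generic_direction_opposite n phi hn hg))
    as [k' [b' [e' [hb' [hb1' hb2']]]]].
  apply is_RInt_unique. unfold section_fun.
  rewrite (cap_fun_eq n s k b phi), (cap_fun_eq n s k' b' (phi + PI)),
    (support_cos_eq n k b phi), (support_cos_eq n k' b' (phi + PI)) by (auto; lra).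
  apply (short_chords_integral n r s k k' b b' phi); auto; apply small_chord_caps; auto.
Qed.

(* The outer integral: [section_fun] except at the finitely many non-generic
   directions in [0, 2π]. *)
Lemma short_chord_total n r s : (3 <= n)%nat -> 0 < r -> 0 <= s -> small_chord n r s ->
  is_RInt (fun phi => RInt (short_chord_ind n r s phi) 0 r) 0 (2 * PI) (INR n * corner_integral n s).
Proof.
  intros hn hr hs hS. destruct (omega_facts n hn) as [h0 [_ hnw]]. pose proof PI_RGT_0.
  apply is_RInt_ext_but_finite with (map (fun j => INR j * (omega n / 2)) (seq 0 (4 * n + 1)))
    (section_fun n r s); [lra | | apply section_fun_total; auto].
  intros x hx hnot. apply short_chord_section; auto. intros j ej. apply hnot.
  apply in_map_iff. exists (Z.to_nat j).
  assert (hj : (0 <= j <= 4 * Z.of_nat n)%Z).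
  { split; apply le_IZR, Rmult_le_reg_r with (omega n / 2); rewrite <- ?ej; try lra.
    rewrite mult_IZR, <- INR_IZR_INZ.
    replace (IZR 4 * INR n * (omega n / 2)) with (2 * (INR n * omega n)) by (simpl; field). lra. }
  split; [rewrite INR_IZR_INZ, Z2Nat.id by lia; auto | apply in_seq; lia].
Qed.

Lemma chord_cdf_value n r s : (3 <= n)%nat -> 0 < r ->
  INR n * corner_integral n s / perimeter n r =
  ((1 - PI / INR n * cot (PI / INR n)) * csc (PI / INR n)
    + PI / INR n * sec (PI / INR n)) * (s / (4 * r)).
Proof.
  intros hn hr. destruct (omega_trig_pos n hn) as [s0 [sw cw]].
  assert (hnz : 0 < INR n) by (apply lt_0_INR; lia).
  pose proof (sin2_cos2 (omega n)) as e. unfold Rsqr in e.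
  unfold corner_integral, perimeter, cot, csc, sec. fold (omega n). rewrite sin_2a.
  field_simplify; try lra. f_equal.
  replace (sin (omega n) ^ 2) with (1 - cos (omega n) ^ 2) by (rewrite <- e; ring). ring.
Qed.

Theorem mainTheorem2 (n : nat) (r s : R) :
  (3 <= n)%nat -> 0 < r -> 0 <= s ->
  (if Nat.eqb n 3 then s <= 2 * r * (cos (PI / (2 * INR n))) ^ 2
   else s <= 2 * r * sin (PI / INR n)) ->
  chord_cdf_is n r s
    (((1 - PI / INR n * cot (PI / INR n)) * csc (PI / INR n)
      + PI / INR n * sec (PI / INR n)) * (s / (4 * r))).
Proof.
  intros hn hr hs hS.
  exists (INR n * corner_integral n s). split; [|symmetry; apply chord_cdf_value; auto].
  exists (fun phi => RInt (short_chord_ind n r s phi) 0 r). split.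
  - intros phi. apply Defs_is_RInt, (RInt_correct (short_chord_ind n r s phi)).
    apply short_chord_ind_integrable; auto.
  - apply Defs_is_RInt, short_chord_total; auto.
Qed.
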